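(* Let $G$ be a finite nilpotent group and let $\mathcal F$ be a family of subgroups of $G$ which contains $G$ and all the maximal subgroups of $G$ and is closed under taking intersections. Let $\mathcal C: X_t<X_{t-1}<\dots<X_1<X_0$ be a chain of elements of $\mathcal F$. If $\mathcal C$ cannot be refined in $\mathcal F$ (i.e. no element of $\mathcal F$ can be added to $\mathcal C$ so that the result is still a chain), then $t\geq u$, where $u$ is the composition length of $G/\Phi(G)$ and $\Phi(G)$ is the Frattini subgroup of $G$. *)

From mathcomp Require Import all_boot all_fingroup all_solvable.
Set Implicit Arguments. Unset Strict Implicit. Unset Printing Implicit Defensive.
Import GroupScope.

Definition is_chain (gT : finGroupType) (S : {set {group gT}}) : Prop :=
  forall A B : {group gT}, A \in S -> B \in S -> A \subset B \/ B \subset A.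

(* The chain X_t < ... < X_0, given as X 0, ..., X t. *)
Definition chain_set (gT : finGroupType) (t : nat) (X : nat -> {group gT}) :
  {set {group gT}} := [set X (nat_of_ord i) | i : 'I_t.+1].

From mathcomp Require Import all_boot all_fingroup all_solvable.
Import GroupScope.
Set Implicit Arguments. Unset Strict Implicit.

(* For H <= G let cl(H) be the intersection of G with the maximal subgroups of
   G containing H. Along the chain, cl(X_0) = G because G is comparable with
   every X_i, and cl(X_t) = Phi(G) because X_t lies in every maximal subgroup M
   (otherwise X_t :&: M would refine the chain). Unrefinability also forces
   X_i :&: M = X_(i+1) for every maximal M containing X_(i+1) but not X_i. In a
   nilpotent group maximal subgroups are normal of prime index, and then
   A(M :&: M') is again maximal for two such M, M'; this yields that
   |cl(X_i) : cl(X_(i+1))| is 1 or a prime. So |G : Phi(G)| has at most t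
   prime factors counted with multiplicity, which bounds the composition
   length of G/Phi(G). *)

Section PrimeFactorCount.

Variable N : nat.

(* Omega n counts the prime factors of n with multiplicity, but only those
   below N: this keeps Omega additive on positive integers while making it
   the genuine count for n < N. *)
Definition Omega (n : nat) : nat := \sum_(p < N) logn p n.

Lemma OmegaM m n : 0 < m -> 0 < n -> Omega (m * n) = Omega m + Omega n.
Proof.
by move=> m_gt0 n_gt0; rewrite /Omega -big_split; apply: eq_bigr => p _; rewrite lognM.
Qed.

Lemma Omega1 : Omega 1 = 0.
Proof. by rewrite /Omega big1 // => p _; rewrite logn1. Qed.

Lemma Omega_prime p : prime p -> Omega p <= 1.
Proof.
move=> p_pr; rewrite /Omega.
under eq_bigr => q _ do rewrite logn_prime //.
have [p_lt_N | N_le_p] := ltnP p N.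
  rewrite (bigD1 (Ordinal p_lt_N)) //= eqxx big1 // => q /eqP q_neq_p.
  by case: eqP => // q_eq_p; case: q_neq_p; apply: val_inj.
by rewrite big1 // => q _; case: eqP => // q_eq_p; have := ltn_ord q; rewrite q_eq_p ltnNge N_le_p.
Qed.

Lemma Omega_gt0 n : 1 < n -> n < N -> 0 < Omega n.
Proof.
move=> n_gt1 n_lt_N; have n_gt0 : 0 < n by apply: ltnW.
have pdiv_lt_N : pdiv n < N by apply: leq_ltn_trans (pdiv_leq n_gt0) n_lt_N.
rewrite /Omega (bigD1 (Ordinal pdiv_lt_N)) //= ltn_addr //.
by rewrite logn_gt0 mem_primes pdiv_prime // n_gt0 pdiv_dvd.
Qed.

End PrimeFactorCount.

Lemma comps_size_le_Omega (gT : finGroupType) N (K : {group gT}) s :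
  #|K| < N -> comps K s -> size s <= Omega N #|K|.
Proof.
elim: s K => [//|H s IHs] K K_lt_N compsK.
have compsH := comps_cons compsK.
have/compsP [_ /= /andP[maxH _]] := compsK.
have sHK := maxnormal_sub maxH.
rewrite -(Lagrange sHK) OmegaM ?cardG_gt0 ?indexg_gt0 // addnC -add1n leq_add //.
  apply: Omega_gt0; first by rewrite indexg_gt1; case/andP: (maxnormal_proper maxH).
  exact: leq_ltn_trans (dvdn_leq (cardG_gt0 K) (dvdn_indexg K H)) K_lt_N.
by apply: IHs compsH; apply: leq_ltn_trans (subset_leq_card sHK) K_lt_N.
Qed.

Lemma nonincreasing_chain_sub (gT : finGroupType) (C : nat -> {group gT}) t i j :
  (forall k, k < t -> C k.+1 \subset C k) -> i <= j <= t -> C j \subset C i.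
Proof.
move=> sC; elim: j => [|j IHj] /andP[le_ij le_jt]; first by case: i le_ij.
move: le_ij; rewrite leq_eqVlt => /orP[/eqP-> // | lt_ij].
by apply: subset_trans (sC j le_jt) (IHj _); rewrite -ltnS lt_ij ltnW.
Qed.

Lemma Omega_index_chain (gT : finGroupType) N (C : nat -> {group gT}) t :
  (forall i, i < t -> C i.+1 \subset C i) ->
  (forall i, i < t -> Omega N #|C i : C i.+1| <= 1) ->
  Omega N #|C 0 : C t| <= t.
Proof.
move=> sC OmegaC; elim: t sC OmegaC => [|t IHt] sC OmegaC.
  by rewrite indexgg Omega1.
have sCt0 : C t \subset C 0.
  by apply: (nonincreasing_chain_sub (t := t)) => [k lt_kt|]; [apply/sC/leqW | rewrite leqnn].
rewrite -(Lagrange_index sCt0 (sC t (ltnSn t))) OmegaM ?indexg_gt0 //.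
rewrite -[X in _ <= X]addn1 leq_add ?OmegaC //.
by apply: IHt => i lt_it; [apply: sC | apply: OmegaC]; apply: leqW.
Qed.

Lemma index_meet_normal_maximal (gT : finGroupType) (G M A : {group gT}) :
  M <| G -> maximal M G -> A \subset G -> ~~ (A \subset M) ->
  #|A : A :&: M| = #|G : M|.
Proof.
by move=> nsMG maxM sAG nsAM; rewrite indexgI -indexMg (mulg_normal_maximal nsMG).
Qed.

Section NilpotentMaximal.

Variables (gT : finGroupType) (G : {group gT}).
Hypothesis nilG : nilpotent G.
Implicit Types A M : {group gT}.

Lemma nilpotent_maximal_normal M : maximal M G -> M <| G.
Proof.
case/maxgroupP=> /andP[sMG not_sGM] maxM; rewrite /normal sMG.
have:= subsetIl G 'N(M); rewrite subEproper.
case/predU1P=> [/setIidPl-> // | /maxM/= NM_eq_M]; case/negP: not_sGM.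
rewrite (nilpotent_sub_norm nilG sMG) //.
by rewrite NM_eq_M // subsetI sMG normG.
Qed.

Lemma nilpotent_maximal_index_prime M : maximal M G -> prime #|G : M|.
Proof.
move=> maxM; apply: index_maxnormal_sol_prime; first exact: nilpotent_sol.
have nsMG := nilpotent_maximal_normal maxM.
case/maxgroupP: maxM => ltMG maxM; apply/maxgroupP; split.
  by rewrite ltMG normal_norm.
by move=> H /andP[ltHG _]; apply: maxM.
Qed.

Lemma index_meet_maximal A M :
  maximal M G -> A \subset G -> ~~ (A \subset M) -> #|A : A :&: M| = #|G : M|.
Proof. by move=> maxM; apply: index_meet_normal_maximal (nilpotent_maximal_normal maxM) maxM. Qed.

Lemma joing_meet_maximalI A M (M' : {group gT}) :
  maximal M G -> maximal M' G -> A \subset G -> A :&: M \subset M' ->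
  (A <*> (M :&: M')) :&: M = M :&: M'.
Proof.
move=> maxM maxM' sAG sAMM'.
have nsMM'G := normalI (nilpotent_maximal_normal maxM) (nilpotent_maximal_normal maxM').
rewrite norm_joinEl ?(subset_trans sAG (normal_norm nsMM'G)) //.
rewrite -[LHS]setIC -group_modr ?subsetIl //; apply: mulSGid.
by rewrite /= subsetI subsetIl setIC.
Qed.

Lemma maximal_joing_meet A M (M' : {group gT}) :
  maximal M G -> maximal M' G -> A \subset G -> ~~ (A \subset M) ->
  ~~ (M \subset M') -> A :&: M \subset M' -> maximal (A <*> (M :&: M')) G.
Proof.
move=> maxM maxM' sAG nsAM nsMM' sAMM'.
have sMG := proper_sub (maxgroupp maxM).
set D := (M :&: M')%G; set K := (A <*> D)%G.
have sKG : K \subset G by rewrite join_subG sAG subIset ?sMG.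
have iK : #|K : D| = #|G : M|.
  rewrite -[gval D](joing_meet_maximalI maxM maxM' sAG sAMM').
  apply: index_meet_maximal => //; apply: contra nsAM; apply: subset_trans.
  exact: joing_subl.
have iM : #|M : D| = #|G : M'| by apply: index_meet_maximal.
apply: (p_index_maximal sKG).
suff -> : #|G : K| = #|G : M'| by apply: nilpotent_maximal_index_prime.
apply/eqP; rewrite -(eqn_pmul2r (indexg_gt0 G M)) -{1}iK -iM.
rewrite (Lagrange_index sKG) ?joing_subr // mulnC (Lagrange_index sMG) //.
exact: subsetIl.
Qed.

End NilpotentMaximal.

Section MaximalClosure.

Variable gT : finGroupType.
Implicit Types G H K M : {group gT}.

Definition maximal_closure (G H : {set gT}) : {set gT} :=
  \bigcap_(M : {group gT} | maximal_eq M G && (H \subset M)) M.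

Canonical maximal_closure_group (G H : {set gT}) : {group gT} :=
  Eval hnf in [group of maximal_closure G H].

Lemma maximal_closure_sub G H : H \subset G -> maximal_closure G H \subset G.
Proof. by move=> sHG; apply: (bigcap_inf G); rewrite /maximal_eq eqxx. Qed.

Lemma maximal_closure_sub_max G H M :
  maximal M G -> H \subset M -> maximal_closure G H \subset M.
Proof. by move=> maxM sHM; apply: (bigcap_inf M); rewrite /maximal_eq maxM orbT. Qed.

Lemma maximal_closureS G H K :
  H \subset K -> maximal_closure G H \subset maximal_closure G K.
Proof.
move=> sHK; apply/bigcapsP => M /andP[maxM sKM]; apply: (bigcap_inf M).
by rewrite maxM (subset_trans sHK sKM).
Qed.

Lemma maximal_closure_id G : maximal_closure G G = G.
Proof.
apply/eqP; rewrite eqEsubset maximal_closure_sub //.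
by apply/bigcapsP => M /andP[_ sGM].
Qed.

Lemma maximal_closure_Phi G H : H \subset 'Phi(G) -> maximal_closure G H = 'Phi(G).
Proof.
move=> sHPhi; apply: eq_bigl => M; case: (boolP (maximal_eq M G)) => //=.
case/predU1P=> [-> | maxM]; apply: subset_trans sHPhi _.
  exact: Phi_sub.
exact: Phi_sub_max.
Qed.

Section Nilpotent.

Variable G : {group gT}.
Hypothesis nilG : nilpotent G.

Variables A B : {group gT}.
Hypotheses (sAG : A \subset G) (sBA : B \subset A).
Hypothesis meet_eq : forall M, maximal M G -> B \subset M -> ~~ (A \subset M) -> A :&: M = B.

Lemma maximal_closure_meet_sub M :
  maximal M G -> B \subset M -> ~~ (A \subset M) ->
  maximal_closure G A :&: M \subset maximal_closure G B.
Proof.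
move=> maxM sBM nsAM; apply/bigcapsP => M' /andP[/predU1P[-> | maxM'] sBM'].
  exact: subset_trans (subsetIl _ _) (maximal_closure_sub sAG).
have [sAM' | nsAM'] := boolP (A \subset M').
  exact: subset_trans (subsetIl _ _) (maximal_closure_sub_max maxM' sAM').
have [sMM' | nsMM'] := boolP (M \subset M'); first exact: subset_trans (subsetIr _ _) sMM'.
have sAMM' : A :&: M \subset M' by rewrite meet_eq // -(meet_eq maxM') ?subsetIr.
have maxK := maximal_joing_meet nilG maxM maxM' sAG nsAM nsMM' sAMM'.
have sClK : maximal_closure G A \subset A <*> (M :&: M').
  exact: maximal_closure_sub_max maxK (joing_subl _ _).
apply: subset_trans (setSI M sClK) _.
by rewrite (joing_meet_maximalI nilG maxM maxM' sAG sAMM') subsetIr.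
Qed.

Lemma maximal_closure_index_prime :
  #|maximal_closure G A : maximal_closure G B| = 1%N \/
  prime #|maximal_closure G A : maximal_closure G B|.
Proof.
case: (pickP [pred M : {group gT} | [&& maximal M G, B \subset M & ~~ (A \subset M)]]).
  move=> M /and3P[maxM sBM nsAM].
  have := indexgS (maximal_closure G A) (maximal_closure_meet_sub maxM sBM nsAM).
  have [sClM | nsClM] := boolP (maximal_closure G A \subset M).
    by rewrite /= (setIidPl sClM) indexgg dvdn1 => /eqP->; left.
  rewrite /= (index_meet_maximal nilG maxM) ?maximal_closure_sub //.
  case/primeP: (nilpotent_maximal_index_prime nilG maxM) => _ dvdM /dvdM /orP[] /eqP->.
    by left.
  by right; apply: nilpotent_maximal_index_prime.
move=> noM; left; suff -> : maximal_closure G A = maximal_closure G B by rewrite indexgg.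
apply: eq_bigl => M; case: (boolP (maximal_eq M G)) => //= /predU1P[-> | maxM].
  by rewrite sAG (subset_trans sBA sAG).
apply/idP/idP => [sAM | sBM]; first exact: subset_trans sBA sAM.
by have := noM M; rewrite /= maxM sBM => /negbFE.
Qed.

End Nilpotent.

End MaximalClosure.

Section UnrefinableChain.

Variables (gT : finGroupType) (G : {group gT}) (F : {set {group gT}}).
Variables (t : nat) (X : nat -> {group gT}).
Implicit Type M : {group gT}.
Hypothesis nilG : nilpotent G.
Hypotheses (sFG : forall H : {group gT}, H \in F -> H \subset G) (GF : G \in F).
Hypothesis maxF : forall M : {group gT}, maximal M G -> M \in F.
Hypothesis meetF : forall H K : {group gT}, H \in F -> K \in F -> (H :&: K)%G \in F.
Hypothesis XF : forall i, i <= t -> X i \in F.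
Hypothesis ltX : forall i, i < t -> X i.+1 \proper X i.
Hypothesis unrefinable : forall Y : {group gT}, Y \in F -> Y \notin chain_set t X ->
  ~ is_chain (Y |: chain_set t X).

Lemma chain_subset i j : i <= j <= t -> X j \subset X i.
Proof. by apply: nonincreasing_chain_sub => k /ltX/proper_sub. Qed.

Lemma chain_subG i : i <= t -> X i \subset G.
Proof. by move/XF/sFG. Qed.

Lemma unrefinable_mem Y : Y \in F ->
  (forall j, j <= t -> (X j \subset Y) || (Y \subset X j)) -> exists2 j, j <= t & Y = X j.
Proof.
move=> YF cmpY; have [/imsetP[i _ ->] | notXY] := boolP (Y \in chain_set t X).
  by exists i => //; rewrite -ltnS ltn_ord.
case: (unrefinable YF notXY) => H K.
rewrite !in_setU1 => /predU1P[-> | /imsetP[i _ ->]] /predU1P[-> | /imsetP[j _ ->]].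
- by left.
- by case/orP: (cmpY j (ltn_ord j)); [right | left].
- by case/orP: (cmpY i (ltn_ord i)); [left | right].
- have [le_ij | le_ji] := leqP i j; [right | left]; apply: chain_subset.
    by rewrite le_ij -ltnS ltn_ord.
  by rewrite ltnW // -ltnS ltn_ord.
Qed.

Lemma chain_top : X 0 = G.
Proof.
have [j le_jt GXj] : exists2 j, j <= t & G = X j.
  by apply: unrefinable_mem => // j le_jt; rewrite chain_subG.
by apply/val_inj/eqP; rewrite eqEsubset chain_subG // GXj chain_subset //.
Qed.

Lemma chain_meet_maximal_mem i M : i <= t -> maximal M G ->
  (i < t -> X i.+1 \subset M) -> exists2 j, j <= t & (X i :&: M)%G = X j.
Proof.
move=> le_it maxM sXM; apply: unrefinable_mem => [|j le_jt].
  by apply: meetF; [apply: XF | apply: maxF].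
have [le_ji | lt_ij] := leqP j i.
  by rewrite (subset_trans (subsetIl _ _) (chain_subset _)) ?orbT // le_ji.
have sXjXi1 : X j \subset X i.+1 by apply: chain_subset; rewrite lt_ij le_jt.
rewrite subsetI (subset_trans sXjXi1 (sXM (leq_trans lt_ij le_jt))).
by rewrite chain_subset // ltnW.
Qed.

Lemma chain_bottom_sub_Phi : X t \subset 'Phi(G).
Proof.
apply/bigcapsP => M /predU1P[-> | maxM]; first exact: chain_subG.
have [j le_jt /(congr1 val)/= XtM] : exists2 j, j <= t & (X t :&: M)%G = X j.
  by apply: chain_meet_maximal_mem => //; rewrite ltnn.
have sXtXj : X t \subset X j by apply: chain_subset; rewrite le_jt leqnn.
by apply: subset_trans sXtXj _; rewrite -XtM subsetIr.
Qed.

Lemma chain_meet_maximal i M : i < t -> maximal M G -> X i.+1 \subset M ->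
  ~~ (X i \subset M) -> X i :&: M = X i.+1.
Proof.
move=> lt_it maxM sXM nsXM.
have [j le_jt /(congr1 val)/= XiM] := chain_meet_maximal_mem (ltnW lt_it) maxM (fun _ => sXM).
have lt_ij : i < j.
  rewrite ltnNge; apply: contra nsXM => le_ji.
  have sXiXj : X i \subset X j by apply: chain_subset; rewrite le_ji ltnW.
  by apply: subset_trans sXiXj _; rewrite -XiM subsetIr.
have sXi1Xi : X i.+1 \subset X i by apply: chain_subset; rewrite leqnSn lt_it.
by apply/eqP; rewrite eqEsubset subsetI sXM sXi1Xi XiM chain_subset ?lt_ij ?le_jt.
Qed.

Lemma Omega_index_Phi_le_chain_length N : Omega N #|G : 'Phi(G)| <= t.
Proof.
pose C i := maximal_closure_group G (X i).
have sC i : i < t -> C i.+1 \subset C i.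
  by move=> lt_it; apply/maximal_closureS/proper_sub/ltX.
have OmegaC i : i < t -> Omega N #|C i : C i.+1| <= 1.
  move=> lt_it; have sXiG := chain_subG (ltnW lt_it).
  have [-> | ] := maximal_closure_index_prime nilG sXiG (proper_sub (ltX lt_it))
    (fun M => chain_meet_maximal lt_it (M := M)).
    by rewrite Omega1.
  exact: Omega_prime.
have := Omega_index_chain sC OmegaC.
by rewrite /C /= chain_top maximal_closure_id maximal_closure_Phi ?chain_bottom_sub_Phi.
Qed.

End UnrefinableChain.

Unset Implicit Arguments. Set Strict Implicit.

Theorem mainTheorem4 (gT : finGroupType) (G : {group gT})
  (F : {set {group gT}}) (t : nat) (X : nat -> {group gT}) :
  nilpotent G ->
  (forall H : {group gT}, H \in F -> H \subset G) ->
  G \in F ->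
  (forall M : {group gT}, maximal M G -> M \in F) ->
  (forall H K : {group gT}, H \in F -> K \in F -> (H :&: K)%G \in F) ->
  (forall i, i <= t -> X i \in F) ->
  (forall i, i < t -> X i.+1 \proper X i) ->
  (forall Y : {group gT}, Y \in F -> Y \notin chain_set t X ->
     ~ is_chain (Y |: chain_set t X)) ->
  forall s : seq {group coset_of 'Phi(G)},
    comps (G / 'Phi(G))%G s -> size s <= t.
Proof.
move=> nilG sFG GF maxF meetF XF ltX unref s compsQ.
have nPhiG := normal_norm (Phi_normal G).
apply: leq_trans (Omega_index_Phi_le_chain_length nilG sFG GF maxF meetF XF ltX unref #|gT|.+1).
rewrite -card_quotient //; apply: comps_size_le_Omega compsQ.
by rewrite ltnS card_quotient // (leq_trans (dvdn_leq _ (dvdn_indexg G _)) (max_card _)).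
Qed.
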